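(* Let $D_K$ be a relative $K$-entropy satisfying Properties (a), (b), (c) and (d) below, and let $H_K$ be the associated conditional entropy, defined by one of the two forms below. Then for every POVM $X=\{X_j\}$ on $\mathcal{H}_A$ and every density operator $\rho_{AB}$, $H_K(X|B)\ge0$, with equality if the operators $\mathrm{Tr}_A(X_j\rho_{AB})$ (for the different $j$) have mutually orthogonal supports.
   Context: All Hilbert spaces are finite-dimensional; $\log$ has an arbitrary but fixed base. A relative $K$-entropy $D_K$ assigns to every pair $(S,T)$ of positive semidefinite operators on a common Hilbert space an extended real number $D_K(S\|T)$. Properties: (a) for every trace-preserving completely positive map $\mathcal{E}$ (possibly between different spaces), $D_K(\mathcal{E}(S)\|\mathcal{E}(T))\le D_K(S\|T)$; (b) for positive semidefinite $S,T$ on $\mathcal{H}$ and $T'$ on $\mathcal{H}'$, $D_K(S\oplus 0\,\|\,T\oplus T')=D_K(S\|T)$; (c) for every constant $c>0$, $D_K(S\|cT)=D_K(S\|T)+\log\frac1c$; (d) $D_K(\rho\|\rho)=0$ for every density operator $\rho$. The conditional $K$-entropy of a density operator $\rho_{AB}$ is either $H_K(A|B)=-D_K(\rho_{AB}\|\mathbb{1}_A\otimes\rho_B)$ for all $\rho_{AB}$, or $H_K(A|B)=\max_{\sigma_B}[-D_K(\rho_{AB}\|\mathbb{1}_A\otimes\sigma_B)]$ for all $\rho_{AB}$, maximum over density operators $\sigma_B$. For a POVM $X=\{X_j\}$ on $\mathcal{H}_A$ ($X_j\ge0$, $\sum_jX_j=\mathbb{1}$), let $\mathcal{X}:\rho_A\mapsto\sum_j|j\rangle\langle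 j|_X\,\mathrm{Tr}(X_j\rho_A)$ with $\{|j\rangle\}$ orthonormal in a register $\mathcal{H}_X$; $H_K(X|B)$ denotes $H_K$ of the state $(\mathcal{X}\otimes\mathcal{I})(\rho_{AB})$ (register $X$ given $B$). *)

From mathcomp Require Import all_boot all_order all_algebra.
From mathcomp Require Import complex.
From mathcomp Require Import mathcomp_extra boolp classical_sets reals ereal exp.

Set Implicit Arguments.
Unset Strict Implicit.
Unset Printing Implicit Defensive.

Import Order.TTheory GRing.Theory Num.Theory.
Local Open Scope ring_scope.

(* Finite-dimensional Hilbert spaces are modelled as C^n, C = R[i] for a
   realType R; operators on C^n are matrices 'M[R[i]]_n.  The tensor
   product C^a (x) C^b is C^(a*b) with the basis ordering given by
   MathComp's [mxvec_index]. *)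

Section QDefs.
Variable R : realType.
Local Notation C := R[i].

Definition adjmx m n (A : 'M[C]_(m, n)) : 'M[C]_(n, m) := (map_mx Num.conj A)^T.

Definition psd n (M : 'M[C]_n) : Prop :=
  adjmx M = M /\ forall x : 'cV[C]_n, 0 <= (adjmx x *m M *m x) 0 0.

Definition density n (rho : 'M[C]_n) : Prop := psd rho /\ \tr rho = 1.

Definition pidx m n (i : 'I_m) (j : 'I_n) : 'I_(m * n) := mxvec_index i j.
Definition unpair m n (p : 'I_(m * n)) : 'I_m * 'I_n :=
  enum_val (cast_ord (esym (mxvec_cast m n)) p).

Definition tensmx' m n (A : 'M[C]_m) (B : 'M[C]_n) : 'M[C]_(m * n) :=
  \matrix_(p, q) (A (unpair p).1 (unpair q).1 * B (unpair p).2 (unpair q).2).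

Definition ptraceA a b (M : 'M[C]_(a * b)) : 'M[C]_b :=
  \matrix_(s, t) \sum_(i < a) M (pidx i s) (pidx i t).

(* (id_k (x) E)(M) for E : 'M_n -> 'M_m *)
Definition ampl_left k n m (E : 'M[C]_n -> 'M[C]_m) (M : 'M[C]_(k * n))
  : 'M[C]_(k * m) :=
  \matrix_(p, q)
    E (\matrix_(i, j) M (pidx (unpair p).1 i) (pidx (unpair q).1 j))
      (unpair p).2 (unpair q).2.

(* (E (x) id_b)(M) for E : 'M_a -> 'M_k *)
Definition ampl_right a k b (E : 'M[C]_a -> 'M[C]_k) (M : 'M[C]_(a * b))
  : 'M[C]_(k * b) :=
  \matrix_(p, q)
    E (\matrix_(i, j) M (pidx i (unpair p).2) (pidx j (unpair q).2))
      (unpair p).1 (unpair q).1.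

Definition is_linear n m (E : 'M[C]_n -> 'M[C]_m) : Prop :=
  forall (c : C) (X Y : 'M[C]_n), E (c *: X + Y) = c *: E X + E Y.

Definition completely_positive n m (E : 'M[C]_n -> 'M[C]_m) : Prop :=
  forall k (P : 'M[C]_(k * n)), psd P -> psd (ampl_left E P).

Definition trace_preserving n m (E : 'M[C]_n -> 'M[C]_m) : Prop :=
  forall X : 'M[C]_n, \tr (E X) = \tr X.

Definition cptp n m (E : 'M[C]_n -> 'M[C]_m) : Prop :=
  [/\ is_linear E, completely_positive E & trace_preserving E].

Definition logb (bs x : R) : R := ln x / ln bs.

Definition relEnt := forall n : nat, 'M[C]_n -> 'M[C]_n -> \bar R.

Definition propA (D : relEnt) : Prop :=
  forall n m (E : 'M[C]_n -> 'M[C]_m) (S T : 'M[C]_n),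
    cptp E -> psd S -> psd T -> (D m (E S) (E T) <= D n S T)%E.

Definition propB (D : relEnt) : Prop :=
  forall n n' (S T : 'M[C]_n) (T' : 'M[C]_n'),
    psd S -> psd T -> psd T' ->
    D (n + n')%N (block_mx S 0 0 0) (block_mx T 0 0 T') = D n S T.

Definition propC (bs : R) (D : relEnt) : Prop :=
  forall n (S T : 'M[C]_n) (c : R), psd S -> psd T -> 0 < c ->
    D n S (Complex c 0 *: T) = (D n S T + (logb bs c^-1)%:E)%E.

Definition propD (D : relEnt) : Prop :=
  forall n (rho : 'M[C]_n), density rho -> D n rho rho = 0%E.

(* conditional K-entropy H_K(A|B) of rho_AB on C^a (x) C^b;
   form = true : H = - D(rho_AB || 1_A (x) rho_B)
   form = false: H = max_{sigma_B} - D(rho_AB || 1_A (x) sigma_B)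
                 (written as a supremum, which is the maximum when attained) *)
Definition condEnt (D : relEnt) (form : bool) a b (rho : 'M[C]_(a * b)) : \bar R :=
  if form then (- D (a * b)%N rho (tensmx' 1%:M (ptraceA rho)))%E
  else ereal_sup [set (- D (a * b)%N rho (tensmx' 1%:M sigma))%E
                 | sigma in [set sigma : 'M[C]_b | density sigma]].

Definition povm a k (X : 'I_k -> 'M[C]_a) : Prop :=
  (forall j, psd (X j)) /\ \sum_(j < k) X j = 1%:M.

Definition measch a k (X : 'I_k -> 'M[C]_a) (rhoA : 'M[C]_a) : 'M[C]_k :=
  \matrix_(j, j') (if j == j' then \tr (X j *m rhoA) else 0).

Definition condEntX (D : relEnt) (form : bool) a b k (X : 'I_k -> 'M[C]_a)
  (rho : 'M[C]_(a * b)) : \bar R :=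
  condEnt D form (ampl_right (measch X) rho).

Definition orth_supp n (M N : 'M[C]_n) : Prop :=
  forall x y : 'cV[C]_n, adjmx (M *m x) *m (N *m y) = 0.

End QDefs.

(* The measured state [sigma = (X (x) id)(rho)] is block diagonal, [sigma = (+)_j om_j]
   with [om_j = Tr_A ((X_j (x) 1) rho)], and its marginal is [rho_B = \sum_j om_j].
   As [1 (x) rho_B - sigma = (+)_j \sum_(l != j) om_l >= 0] and (a), (b) make [D]
   antimonotone in its second argument, [D (sigma || 1 (x) rho_B) <= D (sigma || sigma) = 0],
   so [H_K(X|B) >= 0].  When the [om_j] have orthogonal supports, the projection [Pi]
   onto the support of [sigma] is a test with [Tr (Pi sigma) = 1] and
   [Tr (Pi (1 (x) sigma_B)) <= 1] for every state [sigma_B]; measuring [(Pi, 1 - Pi)]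
   and using (a), (b), (d) gives [D (sigma || 1 (x) sigma_B) >= 0], so [H_K(X|B) <= 0]. *)

From mathcomp Require Import all_boot all_order all_algebra.
From mathcomp Require Import complex.
From mathcomp Require Import mathcomp_extra boolp classical_sets reals ereal exp.
From mathcomp Require Import sesquilinear spectral ring.
Import Order.TTheory GRing.Theory Num.Theory Num.Def.
Local Open Scope ring_scope.

Set Implicit Arguments.
Unset Strict Implicit.
Unset Printing Implicit Defensive.

Section Matrices.
Variable R : realType.
Local Notation C := R[i].

Lemma unpair_pidx m n (i : 'I_m) (j : 'I_n) : unpair (pidx i j) = (i, j).
Proof. by rewrite /unpair /pidx /mxvec_index cast_ordK enum_rankK. Qed.

Lemma pidx_unpair m n (p : 'I_(m * n)) : pidx (unpair p).1 (unpair p).2 = p.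
Proof. by case/mxvec_indexP: p => i j; rewrite unpair_pidx. Qed.

Lemma eq_pidx m n (i i' : 'I_m) (j j' : 'I_n) :
  (pidx i j == pidx i' j') = (i == i') && (j == j').
Proof.
apply/eqP/andP => [/(congr1 (@unpair _ _))|[/eqP -> /eqP ->]] //.
by rewrite !unpair_pidx => -[-> ->].
Qed.

Lemma big_pidx m n (F : 'I_(m * n) -> C) :
  \sum_p F p = \sum_i \sum_j F (pidx i j).
Proof.
rewrite pair_bigA (reindex (fun ij : 'I_m * 'I_n => pidx ij.1 ij.2)) //=.
exists (@unpair m n) => [[i j] _ | p _]; [exact: unpair_pidx | exact: pidx_unpair].
Qed.

Lemma eq_mx_pidx m n (A B : 'M[C]_(m * n)) :
  (forall i j i' j', A (pidx i j) (pidx i' j') = B (pidx i j) (pidx i' j')) -> A = B.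
Proof. by move=> eAB; apply/matrixP => p q; rewrite -(pidx_unpair p) -(pidx_unpair q). Qed.

Lemma adjmxE m n (A : 'M[C]_(m, n)) i j : adjmx A i j = (A j i)^*.
Proof. by rewrite /adjmx !mxE. Qed.

Lemma adjmxK m n (A : 'M[C]_(m, n)) : adjmx (adjmx A) = A.
Proof. by apply/matrixP => i j; rewrite !adjmxE conjCK. Qed.

Lemma adjmxM m n p (A : 'M[C]_(m, n)) (B : 'M[C]_(n, p)) :
  adjmx (A *m B) = adjmx B *m adjmx A.
Proof.
apply/matrixP => i j; rewrite !adjmxE !mxE rmorph_sum; apply: eq_bigr => l _.
by rewrite rmorphM !adjmxE mulrC.
Qed.

Lemma adjmxD m n (A B : 'M[C]_(m, n)) : adjmx (A + B) = adjmx A + adjmx B.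
Proof. by apply/matrixP => i j; rewrite [in RHS]mxE !adjmxE mxE rmorphD. Qed.

Lemma adjmxN m n (A : 'M[C]_(m, n)) : adjmx (- A) = - adjmx A.
Proof. by apply/matrixP => i j; rewrite [in RHS]mxE !adjmxE mxE rmorphN. Qed.

Lemma adjmx0 m n : adjmx (0 : 'M[C]_(m, n)) = 0.
Proof. by apply/matrixP => i j; rewrite !adjmxE !mxE rmorph0. Qed.

Lemma adjmx1 n : adjmx (1%:M : 'M[C]_n) = 1%:M.
Proof.
by apply/matrixP => i j; rewrite !adjmxE !mxE eq_sym; case: eqP; rewrite ?rmorph1 ?rmorph0.
Qed.

Lemma adjmx_sum m n I (r : seq I) (F : I -> 'M[C]_(m, n)) :
  adjmx (\sum_(i <- r) F i) = \sum_(i <- r) adjmx (F i).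
Proof. by elim/big_rec2: _ => [|i A B _ <-]; rewrite ?adjmx0 ?adjmxD. Qed.

Lemma adjmxZ m n (c : C) (A : 'M[C]_(m, n)) : adjmx (c *: A) = c^* *: adjmx A.
Proof. by apply/matrixP => i j; rewrite [in RHS]mxE !adjmxE mxE rmorphM. Qed.

Lemma adjmx_row m n1 n2 (A : 'M[C]_(m, n1)) (B : 'M[C]_(m, n2)) :
  adjmx (row_mx A B) = col_mx (adjmx A) (adjmx B).
Proof.
apply/matrixP => i j; rewrite adjmxE -(splitK i).
by case: (split i) => i'; rewrite ?row_mxEl ?row_mxEr ?col_mxEu ?col_mxEd adjmxE.
Qed.

Lemma trmxC_adjmx m n (A : 'M[C]_(m, n)) : map_mx conjC A^T = adjmx A.
Proof. by apply/matrixP => i j; rewrite adjmxE !mxE. Qed.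

Lemma psd_congr n m (P : 'M[C]_n) (W : 'M[C]_(n, m)) :
  psd P -> psd (adjmx W *m P *m W).
Proof.
case=> hP fP; split; first by rewrite !adjmxM adjmxK hP mulmxA.
by move=> x; rewrite -!mulmxA mulmxA -adjmxM mulmxA; exact: fP.
Qed.

Lemma psd0 n : psd (0 : 'M[C]_n).
Proof. by split; [rewrite adjmx0 | move=> x; rewrite mulmx0 mul0mx mxE]. Qed.

Lemma psdD n (P Q : 'M[C]_n) : psd P -> psd Q -> psd (P + Q).
Proof.
case=> hP fP [hQ fQ]; split; first by rewrite adjmxD hP hQ.
by move=> x; rewrite mulmxDr mulmxDl mxE addr_ge0.
Qed.

Lemma psd_sum n I (r : seq I) (P : pred I) (F : I -> 'M[C]_n) :
  (forall i, P i -> psd (F i)) -> psd (\sum_(i <- r | P i) F i).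
Proof. by move=> h; apply: big_ind => //; [exact: psd0 | exact: psdD]. Qed.

Lemma psd1 n : psd (1%:M : 'M[C]_n).
Proof.
split=> [|x]; first exact: adjmx1.
by rewrite mulmx1 mxE sumr_ge0 // => i _; rewrite adjmxE mulrC -normCK exprn_ge0.
Qed.

Lemma psd_adjmxM n m (W : 'M[C]_(n, m)) : psd (adjmx W *m W).
Proof. by have := psd_congr W (psd1 n); rewrite mulmx1. Qed.

Lemma psd_scalar_mx n (c : C) : 0 <= c -> psd (c%:M : 'M[C]_n).
Proof.
move=> c0; split=> [|x].
  apply/matrixP => i j; rewrite adjmxE !mxE eq_sym.
  by case: eqP => _; rewrite ?mulr1n ?mulr0n ?rmorph0 ?conj_Creal ?ger0_real.
by rewrite -scalemx1 -scalemxAr -scalemxAl mxE mulr_ge0 //; case: (psd1 n) => _ ->.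
Qed.

Lemma psd_block n n' (S : 'M[C]_n) (T : 'M[C]_n') :
  psd S -> psd T -> psd (block_mx S 0 0 T).
Proof.
move=> hS hT; have -> : block_mx S 0 0 T =
    adjmx (row_mx 1%:M 0) *m S *m row_mx 1%:M 0 + adjmx (row_mx 0 1%:M) *m T *m row_mx 0 1%:M.
  by rewrite !adjmx_row !adjmx1 !adjmx0 !mul_col_mx !mul1mx !mul0mx !mul_mx_row !mulmx1
    !mulmx0 -!row_mx0 add_col_mx !add_row_mx !addr0 !add0r.
by apply: psdD; apply: psd_congr.
Qed.

Lemma psd_diag n (P : 'M[C]_n) i : psd P -> 0 <= P i i.
Proof.
case=> _ /(_ (delta_mx i 0)); congr (_ <= _).
rewrite mxE (bigD1 i) //= big1 => [|l /negbTE hl]; last by rewrite !mxE hl mulr0.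
rewrite addr0 mxE (bigD1 i) //= big1 => [|l /negbTE hl]; last first.
  by rewrite adjmxE !mxE hl rmorph0 mul0r.
by rewrite addr0 adjmxE !mxE !eqxx rmorph1 mul1r mulr1.
Qed.

Lemma mxtrace_psd_ge0 n (P : 'M[C]_n) : psd P -> 0 <= \tr P.
Proof. by move=> h; rewrite sumr_ge0 // => i _; exact: psd_diag. Qed.

Lemma psd_projector n (Q : 'M[C]_n) :
  adjmx Q = Q -> Q *m Q = Q -> psd Q /\ psd (1%:M - Q).
Proof.
move=> hQ hQQ; split; first by have := psd_adjmxM Q; rewrite hQ hQQ.
have := psd_adjmxM (1%:M - Q); rewrite adjmxD adjmxN adjmx1 hQ.
by rewrite mulmxBl !mulmxBr !mul1mx mulmx1 hQQ subrr subr0.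
Qed.

Lemma unitary_conjM n (U A B : 'M[C]_n) : U *m adjmx U = 1%:M ->
  (adjmx U *m A *m U) *m (adjmx U *m B *m U) = adjmx U *m (A *m B) *m U.
Proof. by move=> UU; rewrite !mulmxA -(mulmxA _ U) UU mulmx1. Qed.

Lemma psd_diagonalize n (Y : 'M[C]_n) : psd Y ->
  exists (U : 'M[C]_n) (d : 'rV[C]_n),
    [/\ U *m adjmx U = 1%:M, Y = adjmx U *m diag_mx d *m U & forall l, 0 <= d 0 l].
Proof.
move=> hY; have /orthomx_spectralP : Y \is normalmx.
  by apply/normalmxP; rewrite trmxC_adjmx hY.1.
have Uu := spectral_unitarymx Y.
rewrite invmx_unitary // trmxC_adjmx.
set U := spectralmx Y; set d := spectral_diag Y => eY.
have UU : U *m adjmx U = 1%:M by move/unitarymxP: Uu; rewrite trmxC_adjmx.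
exists U, d; split=> // l; have := psd_diag l (psd_congr (adjmx U) hY).
by rewrite adjmxK eY !mulmxA UU mul1mx -mulmxA UU mulmx1 mxE eqxx mulr1n.
Qed.

Lemma psd_factor n (Y : 'M[C]_n) : psd Y -> exists K : 'M[C]_n, Y = adjmx K *m K.
Proof.
move=> /psd_diagonalize [U [d [_ -> d0]]].
exists (diag_mx (\row_l sqrtC (d 0 l)) *m U).
rewrite adjmxM -!mulmxA; congr (_ *m _); rewrite mulmxA; congr (_ *m _).
apply/matrixP => i j; rewrite mul_mx_diag [RHS]mxE adjmxE !mxE.
have [->|hij] := eqVneq i j; last by rewrite !mulr0n rmorph0 mul0r.
by rewrite !mulr1n conj_Creal ?ger0_real ?sqrtC_ge0 // -expr2 sqrtCK.
Qed.

Lemma mxtrace_psdM_ge0 n (A B : 'M[C]_n) : psd A -> psd B -> 0 <= \tr (A *m B).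
Proof.
move=> /psd_factor [K ->] hB; rewrite -mulmxA mxtrace_mulC.
by have := mxtrace_psd_ge0 (psd_congr (adjmx K) hB); rewrite adjmxK.
Qed.

(* [P] projects onto the range of [nu]; [M] is the pseudo-inverse of [nu]. *)
Lemma support_projector n (nu : 'M[C]_n) : psd nu ->
  exists P M : 'M[C]_n, [/\ adjmx P = P, P *m P = P, P *m nu = nu,
                            P = nu *m M & P = M *m nu].
Proof.
move=> /psd_diagonalize [U [d [UU -> _]]].
pose e := \row_l ((d 0 l != 0)%:R : C); pose di := \row_l (d 0 l)^-1.
have dde : diag_mx d *m diag_mx di = diag_mx e.
  rewrite mulmx_diag; congr diag_mx; apply/rowP => l; rewrite !mxE.
  by have [->|/mulfV] := eqVneq (d 0 l) 0; rewrite ?mul0r.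
have ded : diag_mx di *m diag_mx d = diag_mx e by rewrite diag_mxC.
have eee : diag_mx e *m diag_mx e = diag_mx e.
  rewrite mulmx_diag; congr diag_mx; apply/rowP => l; rewrite !mxE.
  by case: (_ != 0); rewrite ?mulr1 ?mulr0.
have eded : diag_mx e *m diag_mx d = diag_mx d.
  rewrite mulmx_diag; congr diag_mx; apply/rowP => l; rewrite !mxE.
  by have [->|_] := eqVneq (d 0 l) 0; rewrite ?mulr0 ?mul1r.
exists (adjmx U *m diag_mx e *m U), (adjmx U *m diag_mx di *m U).
rewrite !unitary_conjM // dde ded eee eded; split=> //.
suff adjE : adjmx (diag_mx e) = diag_mx e by rewrite !adjmxM adjmxK adjE mulmxA.
apply/matrixP => i j; rewrite adjmxE !mxE [j == i]eq_sym.
have [->|_] := eqVneq i j; last by rewrite !mulr0n rmorph0.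
by rewrite !mulr1n; case: (d 0 j != 0); rewrite ?rmorph0 ?rmorph1.
Qed.

End Matrices.

Section Operators.
Variable R : realType.
Local Notation C := R[i].

Definition selmx n m (c : 'I_m -> bool) (f : 'I_m -> 'I_n) : 'M[C]_(n, m) :=
  \matrix_(r, s) (c s && (r == f s))%:R.

Lemma selmx_congrE n m m' (c : 'I_m -> bool) (f : 'I_m -> 'I_n)
  (c' : 'I_m' -> bool) (f' : 'I_m' -> 'I_n) (P : 'M[C]_n) s t :
  (adjmx (selmx c f) *m P *m selmx c' f') s t =
  if c s && c' t then P (f s) (f' t) else 0.
Proof.
rewrite mxE (bigD1 (f' t)) //= big1 => [|r /negbTE hr]; last first.
  by rewrite [selmx _ _ _ _]mxE hr andbF mulr0.
rewrite addr0 [selmx _ _ _ _]mxE eqxx andbT mxE (bigD1 (f s)) //= big1 => [|r /negbTE hr].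
  rewrite addr0 adjmxE mxE eqxx andbT.
  by case: (c s); case: (c' t); rewrite ?rmorph1 ?rmorph0 ?mul1r ?mulr1 ?mul0r ?mulr0.
by rewrite adjmxE mxE hr andbF rmorph0 mul0r.
Qed.

Lemma psd_pullback n m (c : 'I_m -> bool) (f : 'I_m -> 'I_n) (P : 'M[C]_n) :
  psd P -> psd (\matrix_(s, t) if c s && c t then P (f s) (f t) else 0).
Proof.
move=> /(psd_congr (selmx c f)); congr psd.
by apply/matrixP => s t; rewrite selmx_congrE mxE.
Qed.

Lemma psd_pullbackT n m (f : 'I_m -> 'I_n) (P : 'M[C]_n) :
  psd P -> psd (\matrix_(s, t) P (f s) (f t)).
Proof. by move=> /(psd_pullback xpredT f); congr psd; apply/matrixP => s t; rewrite !mxE. Qed.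

(* Writing [Y = K^* K], the matrix is [\sum_l W_l^* P W_l] for
   [W_l = \sum_i (K l i)^* selmx (g i)]. *)
Lemma psd_contract N a b (P : 'M[C]_N) (Y : 'M[C]_a) (g : 'I_a -> 'I_b -> 'I_N) :
  psd P -> psd Y ->
  psd (\matrix_(s, t) \sum_i \sum_i' Y i i' * P (g i' s) (g i t)).
Proof.
move=> hP /psd_factor [K ->].
pose W l := \sum_i (K l i)^* *: selmx xpredT (g i).
suff -> : \matrix_(s, t) \sum_i \sum_i' (adjmx K *m K) i i' * P (g i' s) (g i t)
    = \sum_l adjmx (W l) *m P *m W l.
  by apply: psd_sum => l _; exact: psd_congr.
apply/matrixP => s t; rewrite mxE summxE.
have eW l : (adjmx (W l) *m P *m W l) s t =
    \sum_i \sum_i' K l i * (K l i')^* * P (g i s) (g i' t).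
  rewrite adjmx_sum mulmx_suml mulmx_suml summxE; apply: eq_bigr => i _.
  rewrite mulmx_sumr summxE; apply: eq_bigr => i' _.
  by rewrite adjmxZ conjCK -!scalemxAl -scalemxAr scalerA mxE selmx_congrE.
rewrite (eq_bigr _ (fun l _ => eW l)) [RHS]exchange_big.
under [RHS]eq_bigr do rewrite exchange_big.
rewrite [RHS]exchange_big; apply: eq_bigr => i _; apply: eq_bigr => i' _.
rewrite mxE mulr_suml; apply: eq_bigr => l _.
by rewrite adjmxE [(K l i)^* * _]mulrC.
Qed.

Lemma orth_supp_mul0 n (M N : 'M[C]_n) : psd M -> orth_supp M N -> M *m N = 0.
Proof.
move=> hM ho; apply/matrixP => s t.
have := ho (selmx xpredT (fun _ : 'I_1 => s)) (selmx xpredT (fun _ : 'I_1 => t)).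
rewrite adjmxM hM.1 !mulmxA -(mulmxA _ M N) => /matrixP /(_ 0 0).
by rewrite selmx_congrE /= !mxE.
Qed.

Definition bdiag k b (nu : 'I_k -> 'M[C]_b) : 'M[C]_(k * b) :=
  \matrix_(p, q) if (unpair p).1 == (unpair q).1
                 then nu (unpair p).1 (unpair p).2 (unpair q).2 else 0.

Lemma bdiagE k b (nu : 'I_k -> 'M[C]_b) j s j' t :
  bdiag nu (pidx j s) (pidx j' t) = if j == j' then nu j s t else 0.
Proof. by rewrite mxE !unpair_pidx /=; case: eqP => // ->. Qed.

Lemma psd_bdiag k b (nu : 'I_k -> 'M[C]_b) : (forall j, psd (nu j)) -> psd (bdiag nu).
Proof.
move=> h; have -> : bdiag nu = \sum_j \matrix_(p, q)
   (if ((unpair p).1 == j) && ((unpair q).1 == j)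
    then nu j (unpair p).2 (unpair q).2 else 0).
  apply/matrixP => p q; rewrite summxE mxE (bigD1 (unpair p).1) //= big1.
    by rewrite addr0 mxE eqxx /= eq_sym; case: eqP => // ->.
  by move=> j /negbTE hj; rewrite mxE eq_sym hj.
apply: psd_sum => j _.
exact: (psd_pullback (fun p => (unpair p).1 == j) (fun p => (unpair p).2) (h j)).
Qed.

Lemma bdiagM k b (nu mu : 'I_k -> 'M[C]_b) :
  bdiag nu *m bdiag mu = bdiag (fun j => nu j *m mu j).
Proof.
apply: eq_mx_pidx => j s j' t.
rewrite bdiagE mxE big_pidx (bigD1 j) //= [X in _ + X]big1 => [|j2 /negbTE hj]; last first.
  by apply: big1 => s2 _; rewrite bdiagE eq_sym hj mul0r.
rewrite addr0; have [<-|hjj] := eqVneq j j'.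
  by rewrite mxE; apply: eq_bigr => s2 _; rewrite !bdiagE !eqxx.
by apply: big1 => s2 _; rewrite !bdiagE eqxx (negbTE hjj) mulr0.
Qed.

Lemma mxtrace_bdiag k b (nu : 'I_k -> 'M[C]_b) : \tr (bdiag nu) = \sum_j \tr (nu j).
Proof.
rewrite /mxtrace big_pidx; apply: eq_bigr => j _; apply: eq_bigr => s _.
by rewrite bdiagE eqxx.
Qed.

Lemma bdiagB k b (nu mu : 'I_k -> 'M[C]_b) :
  bdiag nu - bdiag mu = bdiag (fun j => nu j - mu j).
Proof. by apply/matrixP => p q; rewrite !mxE; case: eqP; rewrite ?mxE ?subr0. Qed.

Lemma bdiag1 k b : bdiag (fun _ : 'I_k => 1%:M : 'M[C]_b) = 1%:M.
Proof.
apply: eq_mx_pidx => j s j' t; rewrite bdiagE mxE mxE eq_pidx.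
by case: (eqVneq j j') => //=; case: (s == t).
Qed.

Lemma ptraceA_bdiag k b (nu : 'I_k -> 'M[C]_b) : ptraceA (bdiag nu) = \sum_j nu j.
Proof. by apply/matrixP => s t; rewrite !mxE summxE; apply: eq_bigr => j _; rewrite bdiagE eqxx. Qed.

Lemma tensmx1_bdiag k b (M : 'M[C]_b) : tensmx' (1%:M : 'M[C]_k) M = bdiag (fun _ => M).
Proof.
apply: eq_mx_pidx => j s j' t; rewrite bdiagE mxE !unpair_pidx /= mxE.
by case: eqP; rewrite ?mul1r ?mul0r.
Qed.

Definition ptraceAw a b (Y : 'M[C]_a) (rho : 'M[C]_(a * b)) : 'M[C]_b :=
  \matrix_(s, t) \sum_i \sum_i' Y i i' * rho (pidx i' s) (pidx i t).

Lemma ptraceA_tensmx_mul a b (Y : 'M[C]_a) (rho : 'M[C]_(a * b)) :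
  ptraceA (tensmx' Y 1%:M *m rho) = ptraceAw Y rho.
Proof.
apply/matrixP => s t; rewrite !mxE; apply: eq_bigr => i _.
rewrite mxE big_pidx; apply: eq_bigr => i' _.
rewrite (bigD1 s) //= big1 => [|s' hs]; last first.
  by rewrite mxE !unpair_pidx /= mxE eq_sym (negbTE hs) mulr0 mul0r.
by rewrite addr0 mxE !unpair_pidx /= mxE eqxx mulr1.
Qed.

Lemma ptraceAw1 a b (rho : 'M[C]_(a * b)) : ptraceAw 1%:M rho = ptraceA rho.
Proof.
apply/matrixP => s t; rewrite !mxE; apply: eq_bigr => i _.
rewrite (bigD1 i) //= big1 => [|i' hi]; last by rewrite mxE eq_sym (negbTE hi) mul0r.
by rewrite addr0 mxE eqxx mul1r.
Qed.

Lemma psd_ptraceAw a b (Y : 'M[C]_a) (rho : 'M[C]_(a * b)) :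
  psd Y -> psd rho -> psd (ptraceAw Y rho).
Proof. by move=> hY hrho; exact: (psd_contract (fun i s => pidx i s) hrho hY). Qed.

Lemma ptraceAw_sum a b k (Y : 'I_k -> 'M[C]_a) (rho : 'M[C]_(a * b)) :
  ptraceAw (\sum_j Y j) rho = \sum_j ptraceAw (Y j) rho.
Proof.
apply/matrixP => s t; rewrite summxE mxE.
under [RHS]eq_bigr do rewrite mxE.
rewrite [RHS]exchange_big; apply: eq_bigr => i _.
rewrite [RHS]exchange_big; apply: eq_bigr => i' _.
by rewrite summxE mulr_suml.
Qed.

Lemma mxtrace_ptraceA a b (rho : 'M[C]_(a * b)) : \tr (ptraceA rho) = \tr rho.
Proof.
by rewrite /mxtrace big_pidx exchange_big; apply: eq_bigr => s _; rewrite mxE.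
Qed.

Lemma measch_ampl_bdiag a b k (X : 'I_k -> 'M[C]_a) (rho : 'M[C]_(a * b)) :
  ampl_right (measch X) rho = bdiag (fun j => ptraceAw (X j) rho).
Proof.
apply: eq_mx_pidx => j s j' t; rewrite bdiagE mxE !unpair_pidx /= mxE.
case: eqP => // _; rewrite mxE; apply: eq_bigr => i _; rewrite mxE.
by apply: eq_bigr => i' _; rewrite mxE.
Qed.

Definition blocksum n (M : 'M[C]_(n + n)) : 'M[C]_n := ulsubmx M + drsubmx M.

Lemma cptp_blocksum n : cptp (@blocksum n).
Proof.
split.
- by move=> c X Y; apply/matrixP => i j; rewrite !mxE; ring.
- move=> k P hP; have -> : ampl_left (@blocksum n) P =
      \matrix_(p, q) P (pidx (unpair p).1 (lshift n (unpair p).2))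
                       (pidx (unpair q).1 (lshift n (unpair q).2))
    + \matrix_(p, q) P (pidx (unpair p).1 (rshift n (unpair p).2))
                       (pidx (unpair q).1 (rshift n (unpair q).2)).
    by apply/matrixP => p q; rewrite !mxE.
  by apply: psdD; apply: psd_pullbackT.
- by move=> X; rewrite /blocksum mxtraceD -{3}[X]submxK mxtrace_block.
Qed.

Definition binmeas n (A B : 'M[C]_n) (M : 'M[C]_n) : 'M[C]_(1 + 1) :=
  \tr (A *m M) *: delta_mx ord0 ord0 + \tr (B *m M) *: delta_mx ord_max ord_max.

Lemma binmeas_block n (A B M : 'M[C]_n) :
  binmeas A B M = block_mx (\tr (A *m M))%:M 0 0 (\tr (B *m M))%:M.
Proof.
rewrite -[LHS]submxK; congr block_mx; apply/matrixP => i j;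
  by rewrite !mxE (ord1 i) (ord1 j) /= ?mulr1 ?mulr0 ?addr0 ?add0r ?mulr1n.
Qed.

Lemma cptp_binmeas n (A B : 'M[C]_n) :
  psd A -> psd B -> A + B = 1%:M -> cptp (binmeas A B).
Proof.
move=> hA hB hAB; split.
- move=> c X Y; rewrite /binmeas !mulmxDr !mxtraceD -!scalemxAr !mxtraceZ.
  by rewrite !scalerDl -!scalerA scalerDr addrACA.
- move=> k P hP.
  pose contr (Z : 'M[C]_n) : 'M[C]_k :=
    \matrix_(s, t) \sum_r \sum_r' Z r r' * P (pidx s r') (pidx t r).
  have psd_contr Z : psd Z -> psd (contr Z).
    by move=> hZ; exact: (psd_contract (fun r s => pidx s r) hP hZ).
  have -> : ampl_left (binmeas A B) P =
    \matrix_(p, q) (if ((unpair p).2 == ord0) && ((unpair q).2 == ord0)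
                    then contr A (unpair p).1 (unpair q).1 else 0)
  + \matrix_(p, q) (if ((unpair p).2 == ord_max) && ((unpair q).2 == ord_max)
                    then contr B (unpair p).1 (unpair q).1 else 0).
    apply/matrixP => p q; rewrite !mxE.
    have trE (Z : 'M[C]_n) :
        \tr (Z *m \matrix_(i, j) P (pidx (unpair p).1 i) (pidx (unpair q).1 j))
        = contr Z (unpair p).1 (unpair q).1.
      rewrite /mxtrace mxE; apply: eq_bigr => r _; rewrite mxE.
      by apply: eq_bigr => r' _; rewrite mxE.
    have ord0_max (i : 'I_(1 + 1)) : (i == ord0) = ~~ (i == ord_max) by case: i => -[|[|]].
    rewrite !trE !ord0_max.
    by case: ((unpair p).2 == ord_max); case: ((unpair q).2 == ord_max);
      rewrite /= /contr ?mxE ?mulr1 ?mulr0 ?addr0 ?add0r.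
  by apply: psdD; [apply: (psd_pullback _ _ (psd_contr _ hA))
                  | apply: (psd_pullback _ _ (psd_contr _ hB))].
- move=> X; rewrite binmeas_block mxtrace_block !mxtrace_scalar !mulr1n.
  by rewrite -mxtraceD -mulmxDl hAB mul1mx.
Qed.

End Operators.

Section RelativeEntropy.
Variables (R : realType) (D : relEnt R).
Hypotheses (hA : propA D) (hB : propB D) (hD : propD D).
Local Notation C := R[i].

(* Embed [T] and [T' - T] as diagonal blocks and add them up with [blocksum]. *)
Lemma relEnt_antimono n (S T T' : 'M[C]_n) :
  psd S -> psd T -> psd (T' - T) -> (D S T' <= D S T)%E.
Proof.
move=> hS hT hT'.
have := hA (cptp_blocksum R n) (psd_block hS (psd0 R n)) (psd_block hT hT').
by rewrite hB // /blocksum !block_mxKul !block_mxKdr addr0 addrC subrK.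
Qed.

Lemma relEnt_le0 n (S T : 'M[C]_n) : density S -> psd (T - S) -> (D S T <= 0)%E.
Proof. by move=> [hS trS] hTS; rewrite -(hD (conj hS trS)) relEnt_antimono. Qed.

(* Measuring with [(A, 1 - A)] maps [S] to [|0><0|] and [T] to [q |0><0| + r |1><1|]
   with [q = Tr (A T) <= 1]; by (b) this leaves [D 1 q >= D 1 1 = 0]. *)
Lemma relEnt_ge0_of_test n (A S T : 'M[C]_n) :
  psd A -> psd (1%:M - A) -> density S -> psd T ->
  \tr (A *m S) = 1 -> 0 <= 1 - \tr (A *m T) -> (0 <= D S T)%E.
Proof.
move=> hA0 hA1 [hS trS] hT trAS hq1.
have cp : cptp (binmeas A (1%:M - A)) by apply: cptp_binmeas; rewrite // addrC subrK.
have trBS : \tr ((1%:M - A) *m S) = 0 by rewrite mulmxBl mul1mx raddfB /= trS trAS subrr.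
have hq : psd ((\tr (A *m T))%:M : 'M[C]_1) by apply: psd_scalar_mx; apply: mxtrace_psdM_ge0.
have hr : psd ((\tr ((1%:M - A) *m T))%:M : 'M[C]_1) by apply: psd_scalar_mx; apply: mxtrace_psdM_ge0.
have := hA cp hS hT; rewrite !binmeas_block trAS trBS raddf0 hB //; last exact: psd1.
apply: le_trans; rewrite -(hD (conj (psd1 R 1) (mxtrace1 _ _))).
by apply: relEnt_antimono => //; [exact: psd1 | rewrite -raddfB; apply: psd_scalar_mx].
Qed.

Lemma relEnt_cq_le0 k b (om : 'I_k -> 'M[C]_b) :
  (forall j, psd (om j)) -> density (bdiag om) ->
  (D (bdiag om) (tensmx' 1%:M (ptraceA (bdiag om))) <= 0)%E.
Proof.
move=> hom dsig; apply: relEnt_le0 => //.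
rewrite ptraceA_bdiag tensmx1_bdiag bdiagB; apply: psd_bdiag => j.
by rewrite (bigD1 j) //= addrC addrK; apply: psd_sum.
Qed.

(* The test is the projection onto the support of [bdiag om]. *)
Lemma relEnt_cq_ge0 k b (om : 'I_k -> 'M[C]_b) (sB : 'M[C]_b) :
  (forall j, psd (om j)) -> (forall j j', j != j' -> om j *m om j' = 0) ->
  density (bdiag om) -> density sB -> (0 <= D (bdiag om) (tensmx' 1%:M sB))%E.
Proof.
move=> hom horth [hsig trsig] [hsB trsB].
have [P /fin_all_exists [M hP]] := fin_all_exists (fun j => support_projector (hom j)).
have PP j j' : j != j' -> P j *m P j' = 0.
  move=> /horth hjj; case: (hP j) => _ _ _ _ ->; case: (hP j') => _ _ _ -> _.
  by rewrite mulmxA -(mulmxA _ (om j)) hjj mulmx0 mul0mx.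
have psdP j : psd (P j) /\ psd (1%:M - P j).
  by case: (hP j) => hadj hPP _ _ _; exact: psd_projector.
have [_ psdQ] : psd (\sum_j P j) /\ psd (1%:M - \sum_j P j).
  apply: psd_projector.
    by rewrite adjmx_sum; apply: eq_bigr => j _; case: (hP j).
  rewrite mulmx_suml; apply: eq_bigr => j _; rewrite mulmx_sumr (bigD1 j) //= big1.
    by rewrite addr0; case: (hP j).
  by move=> j' hj'; rewrite PP // eq_sym.
apply: (@relEnt_ge0_of_test _ (bdiag P)).
- by apply: psd_bdiag => j; case: (psdP j).
- by rewrite -bdiag1 bdiagB; apply: psd_bdiag => j; case: (psdP j).
- by [].
- by rewrite tensmx1_bdiag; apply: psd_bdiag.
- rewrite bdiagM mxtrace_bdiag -trsig mxtrace_bdiag.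
  by apply: eq_bigr => j _; case: (hP j) => _ _ ->.
- rewrite tensmx1_bdiag bdiagM mxtrace_bdiag -raddf_sum -mulmx_suml -trsB -raddfB /=.
  by rewrite -{1}[sB]mul1mx -mulmxBl; exact: mxtrace_psdM_ge0.
Qed.

Lemma condEnt_ge0 form a b (sig : 'M[C]_(a * b)) :
  density (ptraceA sig) -> (D sig (tensmx' 1%:M (ptraceA sig)) <= 0)%E ->
  (0 <= condEnt D form sig)%E.
Proof.
move=> dB le0; have ge0 : (0 <= - D sig (tensmx' 1%:M (ptraceA sig)))%E by rewrite oppe_ge0.
case: form => //=; apply: le_trans ge0 _.
by apply: ereal_sup_ubound; exists (ptraceA sig).
Qed.

Lemma condEnt_eq0 form a b (sig : 'M[C]_(a * b)) :
  density (ptraceA sig) -> (D sig (tensmx' 1%:M (ptraceA sig)) <= 0)%E ->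
  (forall sB, density sB -> (0 <= D sig (tensmx' 1%:M sB))%E) ->
  condEnt D form sig = 0%E.
Proof.
move=> dB le0 ge0; apply/eqP; rewrite eq_le condEnt_ge0 // andbT.
case: form => /=; first by rewrite oppe_le0; exact: ge0.
by apply: ge_ereal_sup => _ [sB dsB <-]; rewrite oppe_le0; exact: ge0.
Qed.

End RelativeEntropy.

Theorem lemma10 (R : realType) (bs : R) (hbs0 : 0 < bs) (hbs1 : bs != 1)
  (D : relEnt R)
  (hA : propA D) (hB : propB D) (hC : propC bs D) (hD : propD D)
  (form : bool) (a b k : nat) (X : 'I_k -> 'M[R[i]]_a) (rho : 'M[R[i]]_(a * b)) :
  povm X -> density rho ->
  (0 <= condEntX D form X rho)%E /\
  ((forall j j' : 'I_k, j != j' ->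
      orth_supp (ptraceA (tensmx' (X j) 1%:M *m rho))
                (ptraceA (tensmx' (X j') 1%:M *m rho))) ->
   condEntX D form X rho = 0%E).
Proof.
move=> [hX hXsum] [hrho trrho]; rewrite /condEntX measch_ampl_bdiag.
set om := fun j => ptraceAw (X j) rho.
have hom j : psd (om j) by exact: psd_ptraceAw.
have ptr : ptraceA (bdiag om) = ptraceA rho.
  by rewrite ptraceA_bdiag -ptraceAw_sum hXsum ptraceAw1.
have dsig : density (bdiag om).
  split; first exact: psd_bdiag.
  by rewrite mxtrace_bdiag -raddf_sum /= -ptraceA_bdiag ptr mxtrace_ptraceA.
have dB : density (ptraceA (bdiag om)).
  by case: dsig => hsig trsig; split; [rewrite ptraceA_bdiag; exact: psd_sum | rewrite mxtrace_ptraceA].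
have le0 := relEnt_cq_le0 hA hB hD hom dsig.
split=> [|horth]; first exact: condEnt_ge0.
apply: condEnt_eq0 => // sB dsB; apply: relEnt_cq_ge0 => // j j' /horth.
by rewrite !ptraceA_tensmx_mul; exact: orth_supp_mul0 (hom j).
Qed.
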